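(* Let $0<\lambda<\frac{5-\sqrt{21}}{2}$ and let $K$ be the attractor of the IFS $f_1(x)=\lambda x$, $f_2(x)=\lambda x+2\lambda$, $f_3(x)=\lambda x+3\lambda-\lambda^2$, $f_4(x)=\lambda x+1-\lambda$. Then for every $k\ge1$, $$\dim_H(U_{2^k})=\dim_H(U_1)=\frac{\log(2+\sqrt2)}{-\log\lambda}.$$ Moreover $U_i=\emptyset$ for every positive integer $i$ that is not a power of $2$, and $U_{\aleph_0}=\emptyset$.
   Context: A coding of $x\in K$ is a sequence $(i_n)\in\{1,2,3,4\}^{\mathbb{N}}$ with $x=\lim_{n\to\infty}f_{i_1}\circ\cdots\circ f_{i_n}(0)$. For $k\in\{1,2,\dots\}\cup\{\aleph_0\}$, $U_k$ denotes the set of $x\in K$ having exactly $k$ distinct codings. *)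

From Stdlib Require Import Reals Lra List.
Open Scope R_scope.

Inductive idx : Set := I1 | I2 | I3 | I4.

Definition ifs (lam : R) (i : idx) (x : R) : R :=
  match i with
  | I1 => lam * x
  | I2 => lam * x + 2 * lam
  | I3 => lam * x + 3 * lam - lam ^ 2
  | I4 => lam * x + 1 - lam
  end.

(* compose lam c n x = f_{c 0} o f_{c 1} o ... o f_{c (n-1)} (x)
   (the paper indexes codings from 1; we index from 0). *)
Fixpoint compose (lam : R) (c : nat -> idx) (n : nat) (x : R) : R :=
  match n with
  | O => x
  | S m => compose lam c m (ifs lam (c m) x)
  end.

Definition is_coding (lam x : R) (c : nat -> idx) : Prop :=
  Un_cv (fun n => compose lam c n 0) x.

Definition attractor (lam : R) (x : R) : Prop := exists c, is_coding lam x c.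

Definition U (lam : R) (k : nat) (x : R) : Prop :=
  attractor lam x /\
  exists l : list (nat -> idx),
    length l = k /\ NoDup l /\ (forall c, is_coding lam x c <-> In c l).

Definition U_aleph0 (lam : R) (x : R) : Prop :=
  attractor lam x /\
  exists e : nat -> (nat -> idx),
    (forall m n, e m = e n -> m = n) /\
    (forall c, is_coding lam x c <-> exists n, e n = c).

(* Diameters are represented by upper bounds r_n > 0 (diam E_n <= r_n <= delta);
   for s > 0 this gives the same infimum. *)
Definition hausdorff_null (s : R) (A : R -> Prop) : Prop :=
  forall delta eps : R, 0 < delta -> 0 < eps ->
  exists (E : nat -> R -> Prop) (r : nat -> R) (l : R),
    (forall x, A x -> exists n, E n x) /\
    (forall n, 0 < r n <= delta) /\
    (forall n x y, E n x -> E n y -> Rabs (x - y) <= r n) /\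
    infinite_sum (fun n => Rpower (r n) s) l /\ l < eps.

Definition is_glb (P : R -> Prop) (m : R) : Prop :=
  (forall s, P s -> m <= s) /\ (forall m', (forall s, P s -> m' <= s) -> m' <= m).

Definition hausdorff_dim (A : R -> Prop) (d : R) : Prop :=
  is_glb (fun s => 0 < s /\ hausdorff_null s A) d.

From Stdlib Require Import Reals Lra Lia List Classical ClassicalEpsilon FunctionalExtensionality.
Open Scope R_scope.

(* Two codings of a point can only differ through the identity [f_2 o f_4 = f_3 o f_1]:
   where they first disagree one reads 24 and the other 31, and the two tails code the
   same point.  So the codings of a point form a binary tree of such splittings: a
   finite number of codings is a power of 2, and infinitely many splittings produce
   uncountably many codings (a diagonal argument), so [U_aleph0] is empty.

   A point of [U_(2^k)] has fewer than [2^k] occurrences of 24 or 31 in each of its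
   codings, and words with boundedly many such overlaps grow like [(2 + sqrt 2)^n], the
   growth rate of the subshift forbidding 24 and 31; covering by cylinders gives the
   upper bound.  Conversely, prefixing [(24)^k] embeds this subshift into [U_(2^k)],
   sequences first differing at [n] being mapped [~ lam^n] apart (here
   [lam < (5 - sqrt 21) / 2] is used), and the mass distribution principle for its
   Parry measure gives the lower bound. *)

Lemma pow_le_one (x : R) n : 0 <= x <= 1 -> 0 <= x ^ n <= 1.
Proof. intros H. induction n; simpl; nra. Qed.

Lemma pow_le_pow_of_le_one (x : R) m n : 0 <= x <= 1 -> (m <= n)%nat -> x ^ n <= x ^ m.
Proof.
  intros Hx Hmn. replace n with (m + (n - m))%nat by lia. rewrite pow_add.
  pose proof (pow_le_one x (n - m) Hx). pose proof (pow_le_one x m Hx). nra.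
Qed.

Lemma pow_lt_eventually (q e : R) : 0 < q < 1 -> 0 < e -> exists N, forall n, (N <= n)%nat -> q ^ n < e.
Proof.
  intros Hq He. destruct (pow_lt_1_zero q ltac:(rewrite Rabs_right; lra) e He) as [N HN].
  exists N. intros n Hn. specialize (HN n Hn).
  rewrite Rabs_right in HN by (left; apply pow_lt; lra). exact HN.
Qed.

Lemma NoDup_same_length {A : Type} (l l' : list A) : NoDup l -> NoDup l' ->
  (forall a, In a l <-> In a l') -> length l = length l'.
Proof.
  intros H1 H2 H. apply Nat.le_antisymm; apply NoDup_incl_length; auto; intros a Ha; apply H; auto.
Qed.

Lemma Un_cv_const (l : R) : Un_cv (fun _ => l) l.
Proof. intros e He. exists O. intros. unfold R_dist. rewrite Rminus_diag, Rabs_R0. lra. Qed.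

Lemma eq_of_dist_le_pow (q a b : R) : 0 < q < 1 -> (forall n, Rabs (a - b) <= q ^ n) -> a = b.
Proof.
  intros Hq H. destruct (Req_dec a b) as [e|ne]; auto. exfalso.
  destruct (pow_lt_eventually q (Rabs (a - b)) Hq) as [N HN]; [apply Rabs_pos_lt; lra|].
  specialize (HN N (le_n _)). specialize (H N). lra.
Qed.

Lemma Rpower_pos (a b : R) : 0 < Rpower a b.
Proof. apply exp_pos. Qed.

Lemma Rpower_Rpower_inv (a s : R) : 0 < a -> 0 < s -> Rpower (Rpower a (/ s)) s = a.
Proof. intros. rewrite Rpower_mult, Rinv_l by lra. apply Rpower_1; auto. Qed.

Lemma Rpower_inv_Rpower (a s : R) : 0 < a -> 0 < s -> Rpower (Rpower a s) (/ s) = a.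
Proof. intros. rewrite Rpower_mult, Rinv_r by lra. apply Rpower_1; auto. Qed.

Lemma Rpower_pow_base (x s : R) m : 0 < x -> Rpower (x ^ m) s = Rpower x s ^ m.
Proof.
  intro Hx. induction m; simpl.
  - unfold Rpower. rewrite ln_1, Rmult_0_r, exp_0. reflexivity.
  - rewrite <- Rpower_mult_distr, IHm by (auto; apply pow_lt; auto). reflexivity.
Qed.

Lemma Rpower_antimono_of_le_one (x a b : R) : 0 < x <= 1 -> a <= b -> Rpower x b <= Rpower x a.
Proof.
  intros Hx Hab. unfold Rpower.
  assert (ln x <= 0) by (rewrite <- ln_1; destruct (Req_dec x 1) as [->|]; [lra|left; apply ln_increasing; lra]).
  destruct (Req_dec (b * ln x) (a * ln x)) as [E|E]; [rewrite E; lra|].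
  left. apply exp_increasing. nra.
Qed.

Lemma least_witness (P : nat -> Prop) :
  (exists n, P n) -> exists n, P n /\ forall q, (q < n)%nat -> ~ P q.
Proof.
  intros [n Hn]. induction n as [n IH] using (well_founded_induction Wf_nat.lt_wf).
  destruct (classic (exists q, (q < n)%nat /\ P q)) as [[q [Hq1 Hq2]]|Hno].
  - exact (IH q Hq1 Hq2).
  - exists n. split; auto. intros q Hq HP. apply Hno; eauto.
Qed.

Lemma first_difference {A : Type} (c c' : nat -> A) :
  c <> c' -> exists p, c p <> c' p /\ forall q, (q < p)%nat -> c q = c' q.
Proof.
  intro Hne. destruct (least_witness (fun n => c n <> c' n)) as [p [Hp Hmin]].
  - apply NNPP. intro H. apply Hne. apply functional_extensionality. intro n.
    apply NNPP. intro Hn. apply H. eauto.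
  - exists p. split; auto. intros q Hq. apply NNPP. apply Hmin; auto.
Qed.

(** * Hausdorff measure *)

Lemma sum_f_R0_indicator_lt (L : nat) (T : R) N :
  sum_f_R0 (fun j => if Nat.ltb j L then T else 0) N = INR (Nat.min (S N) L) * T.
Proof.
  induction N.
  - simpl. destruct L; simpl; ring.
  - rewrite tech5, IHN. destruct (Nat.ltb_spec (S N) L).
    + rewrite !Nat.min_l by lia. rewrite (S_INR (S N)). ring.
    + rewrite !Nat.min_r by lia. ring.
Qed.

Lemma sum_f_R0_half_pow (eta : R) N :
  sum_f_R0 (fun j => eta * (/ 2) ^ S j) N = eta * (1 - (/ 2) ^ S N).
Proof.
  induction N; [simpl; lra|].
  rewrite tech5, IHN. simpl. lra.
Qed.

Lemma infinite_sum_padded (L : nat) (T eta : R) : 0 < T -> 0 < eta ->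
  exists l, infinite_sum (fun j => if Nat.ltb j L then T else eta * (/ 2) ^ S j) l /\
    l <= INR L * T + eta.
Proof.
  intros HT Heta. set (a := fun j => if Nat.ltb j L then T else eta * (/ 2) ^ S j).
  assert (Hhalf : forall j, 0 < (/ 2) ^ j <= 1) by (intro j; split; [apply pow_lt|apply pow_le_one]; lra).
  assert (Hpartial : forall N, sum_f_R0 a N <= INR L * T + eta).
  { intro N. eapply Rle_trans.
    - apply (sum_Rle _ (fun j => (if Nat.ltb j L then T else 0) + eta * (/ 2) ^ S j)).
      intros j _. unfold a. pose proof (Hhalf (S j)). destruct (Nat.ltb j L); nra.
    - rewrite sum_plus, sum_f_R0_indicator_lt, sum_f_R0_half_pow. pose proof (Hhalf (S N)).
      assert (INR (Nat.min (S N) L) <= INR L) by (apply le_INR; lia). nra. }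
  destruct (growing_cv (sum_f_R0 a)) as [l Hl].
  { intro n. simpl. unfold a. pose proof (Hhalf (S (S n))). destruct (Nat.ltb (S n) L); nra. }
  { exists (INR L * T + eta). intros x [i ->]. apply Hpartial. }
  exists l. split; [exact Hl|].
  eapply Rle_cv_lim; [exact Hpartial|exact Hl|apply Un_cv_const].
Qed.

(* A finite cover by [L] sets of diameter [<= r0] is padded by sets of radii
   [(eta / 2 ^ (j + 1)) ^ (1 / s)], whose [s]-th powers sum to at most [eta]. *)
Lemma hausdorff_null_of_finite_covers (s : R) (A : R -> Prop) : 0 < s ->
  (forall delta eps, 0 < delta -> 0 < eps -> exists (F : list (R -> Prop)) (r0 : R),
     0 < r0 <= delta /\ (forall G z z', In G F -> G z -> G z' -> Rabs (z - z') <= r0) /\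
     (forall x, A x -> exists G, In G F /\ G x) /\ INR (length F) * Rpower r0 s < eps) ->
  hausdorff_null s A.
Proof.
  intros Hs H delta eps Hd He.
  destruct (H delta (eps / 2) Hd ltac:(lra)) as [F [r0 [Hr0 [Hdiam [Hcov Hsum]]]]].
  set (eta := Rmin (eps / 4) (Rpower delta s)).
  assert (Heta : 0 < eta) by (apply Rmin_glb_lt; [lra|apply Rpower_pos]).
  assert (Heta2 : eta <= eps / 4) by apply Rmin_l.
  assert (Heta3 : eta <= Rpower delta s) by apply Rmin_r.
  assert (Hhalf : forall j, 0 < (/ 2) ^ j <= 1) by (intro j; split; [apply pow_lt|apply pow_le_one]; lra).
  set (r := fun j => if Nat.ltb j (length F) then r0 else Rpower (eta * (/ 2) ^ S j) (/ s)).
  destruct (infinite_sum_padded (length F) (Rpower r0 s) eta (Rpower_pos _ _) Heta) as [l [Hl Hle]].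
  exists (fun j z => exists G, nth_error F j = Some G /\ G z), r, l.
  split; [|split; [|split; [|split]]].
  - intros x Ax. destruct (Hcov x Ax) as [G [HG HGx]].
    destruct (In_nth_error F G HG) as [j Hj]. eauto.
  - intro n. unfold r. destruct (Nat.ltb_spec n (length F)); [lra|]. split; [apply Rpower_pos|].
    rewrite <- (Rpower_inv_Rpower delta s) by lra. apply Rle_Rpower_l.
    + left; apply Rinv_0_lt_compat; lra.
    + pose proof (Hhalf (S n)). nra.
  - intros n z z' [G [HG Hz]] [G' [HG' Hz']]. rewrite HG in HG'. injection HG' as <-.
    assert (n < length F)%nat by (apply nth_error_Some; rewrite HG; discriminate).
    unfold r. destruct (Nat.ltb_spec n (length F)); [|lia]. eapply Hdiam; eauto. eapply nth_error_In; eauto.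
  - replace (fun n => Rpower (r n) s) with (fun j => if Nat.ltb j (length F) then Rpower r0 s
                                                     else eta * (/ 2) ^ S j); [exact Hl|].
    apply functional_extensionality. intro j. unfold r. destruct (Nat.ltb j (length F)); auto.
    symmetry. apply Rpower_Rpower_inv; auto. pose proof (Hhalf (S j)). nra.
  - lra.
Qed.

Lemma hausdorff_dim_of_thresholds (A : R -> Prop) (d : R) :
  (forall s, d < s -> hausdorff_null s A) ->
  (forall s, 0 < s -> s < d -> ~ hausdorff_null s A) ->
  0 < d -> hausdorff_dim A d.
Proof.
  intros Hup Hlow Hd. split.
  - intros s [Hs Hn]. destruct (Rle_lt_dec d s) as [h|h]; auto. exfalso. exact (Hlow s Hs h Hn).
  - intros m Hm. destruct (Rle_lt_dec m d) as [h|h]; auto. exfalso.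
    assert (m <= (d + m) / 2) by (apply Hm; split; [lra|apply Hup; lra]). lra.
Qed.

(** * Words and overlaps *)

Lemma idx_eq_dec (a b : idx) : {a = b} + {a <> b}.
Proof. decide equality. Defined.

(* [f_2 o f_4 = f_3 o f_1]: the words 24 and 31 are the only source of multiple codings. *)
Definition is_overlap (a b : idx) : bool :=
  match a, b with I2, I4 | I3, I1 => true | _, _ => false end.

Definition overlap_free (u : nat -> idx) : Prop := forall m, is_overlap (u m) (u (S m)) = false.

Fixpoint words (n : nat) : list (list idx) :=
  match n with
  | O => nil :: nil
  | S n => flat_map (fun a => map (cons a) (words n)) (I1 :: I2 :: I3 :: I4 :: nil)
  end.

Lemma In_words n w : length w = n -> In w (words n).
Proof.
  revert w. induction n as [|n IH]; intros [|a w] Hw; try discriminate; [left; auto|].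
  apply in_flat_map. exists a. split; [destruct a; simpl; tauto|].
  apply in_map, IH. simpl in Hw. lia.
Qed.

Lemma words_length n w : In w (words n) -> length w = n.
Proof.
  revert w. induction n as [|n IH]; intros w Hw.
  - destruct Hw as [<-|[]]. auto.
  - apply in_flat_map in Hw. destruct Hw as [a [_ Hw]]. apply in_map_iff in Hw.
    destruct Hw as [w' [<- Hw']]. simpl. f_equal. auto.
Qed.

Fixpoint overlap_count (w : list idx) : nat :=
  match w with
  | a :: (b :: _) as t => ((if is_overlap a b then 1 else 0) + overlap_count t)%nat
  | _ => O
  end.

Lemma overlap_count_map_seq (c : nat -> idx) j n :
  overlap_count (map c (seq j (S n))) =
  length (filter (fun m => is_overlap (c m) (c (S m))) (seq j n)).
Proof.
  revert j. induction n as [|n IH]; intro j; [reflexivity|].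
  change (overlap_count (map c (seq j (S (S n))))) with
    ((if is_overlap (c j) (c (S j)) then 1 else 0) + overlap_count (map c (seq (S j) (S n))))%nat.
  rewrite IH. simpl. destruct (is_overlap (c j) (c (S j))); reflexivity.
Qed.

Definition sum_list (f : list idx -> R) (l : list (list idx)) : R :=
  fold_right (fun w acc => f w + acc) 0 l.

Lemma sum_list_app f l l' : sum_list f (l ++ l') = sum_list f l + sum_list f l'.
Proof. induction l as [|w l IH]; simpl; [ring|]. rewrite IH. ring. Qed.

Lemma sum_list_map f g l : sum_list f (map g l) = sum_list (fun x => f (g x)) l.
Proof. induction l as [|w l IH]; simpl; auto. rewrite IH. auto. Qed.

Lemma sum_list_scal c f l : sum_list (fun w => c * f w) l = c * sum_list f l.
Proof. induction l as [|w l IH]; simpl; [ring|]. rewrite IH. ring. Qed.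

Lemma sum_list_ext f g l : (forall w, f w = g w) -> sum_list f l = sum_list g l.
Proof. intro H. induction l as [|w l IH]; simpl; auto. rewrite H, IH. auto. Qed.

Lemma sum_list_nonneg f l : (forall w, 0 <= f w) -> 0 <= sum_list f l.
Proof. intro H. induction l as [|w l IH]; simpl; [lra|]. specialize (H w). lra. Qed.

Lemma length_filter_le_sum_list (p : list idx -> bool) g l :
  (forall w, 0 <= g w) -> (forall w, p w = true -> 1 <= g w) ->
  INR (length (filter p l)) <= sum_list g l.
Proof.
  intros H0 H1. induction l as [|w l IH]; simpl; [lra|].
  destruct (p w) eqn:E; simpl length.
  - rewrite S_INR. specialize (H1 w E). lra.
  - specialize (H0 w). lra.
Qed.

Lemma sum_list_words_S f n :
  sum_list f (words (S n)) =
  sum_list (fun w => f (I1 :: w)) (words n) + sum_list (fun w => f (I2 :: w)) (words n) +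
  sum_list (fun w => f (I3 :: w)) (words n) + sum_list (fun w => f (I4 :: w)) (words n).
Proof. simpl. rewrite !sum_list_app, !sum_list_map. simpl. ring. Qed.

(* The vector [(2, rho - 2, rho - 2, 2)] is a [rho]-supersolution of the transfer
   operator which weights each overlap by [eps]: the condition on [rho] is exactly
   the inequality needed in rows 2 and 3. *)
Definition overlap_supersolution (rho : R) (a : idx) : R :=
  match a with I1 | I4 => 2 | I2 | I3 => rho - 2 end.

Lemma overlap_weighted_words_le (eps rho : R) :
  0 < eps <= 1 -> 3 <= rho -> 2 + 2 * eps <= (rho - 2) ^ 2 -> forall n a,
  sum_list (fun w => eps ^ overlap_count (a :: w)) (words n) <=
  rho ^ n * overlap_supersolution rho a.
Proof.
  intros He Hr Hk n. induction n as [|n IH]; intro a.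
  - simpl. destruct a; simpl; lra.
  - rewrite sum_list_words_S.
    assert (Hstep : forall b, sum_list (fun w => eps ^ overlap_count (a :: b :: w)) (words n) =
        eps ^ (if is_overlap a b then 1 else 0) *
        sum_list (fun w => eps ^ overlap_count (b :: w)) (words n)).
    { intro b. rewrite <- sum_list_scal. apply sum_list_ext. intro w.
      simpl overlap_count. rewrite pow_add. reflexivity. }
    rewrite !Hstep.
    assert (Hpos : forall b, 0 <= sum_list (fun w => eps ^ overlap_count (b :: w)) (words n))
      by (intro b; apply sum_list_nonneg; intro; apply pow_le; lra).
    pose proof (IH I1) as A1. pose proof (IH I2) as A2.
    pose proof (IH I3) as A3. pose proof (IH I4) as A4.
    pose proof (Hpos I1). pose proof (Hpos I2). pose proof (Hpos I3). pose proof (Hpos I4).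
    assert (Hrn : 0 < rho ^ n) by (apply pow_lt; lra).
    simpl overlap_supersolution in *. rewrite <- tech_pow_Rmult.
    set (P := rho ^ n) in *.
    set (S1 := sum_list (fun w => eps ^ overlap_count (I1 :: w)) (words n)) in *.
    set (S4 := sum_list (fun w => eps ^ overlap_count (I4 :: w)) (words n)) in *.
    assert (eps * S1 <= eps * (P * 2)) by (apply Rmult_le_compat_l; lra).
    assert (eps * S4 <= eps * (P * 2)) by (apply Rmult_le_compat_l; lra).
    assert (P * (2 + 2 * eps) <= P * (rho - 2) ^ 2) by (apply Rmult_le_compat_l; lra).
    destruct a; simpl is_overlap; rewrite ?pow_O, ?pow_1; simpl overlap_supersolution; nra.
Qed.

(** * The Parry measure of the overlap-free shift *)

Definition mu : R := 2 + sqrt 2.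

Lemma sqrt2_bounds : 1 <= sqrt 2 < 2 /\ sqrt 2 * sqrt 2 = 2.
Proof. pose proof (sqrt_sqrt 2 ltac:(lra)). pose proof (sqrt_pos 2). split; [split|]; nra. Qed.

Lemma mu_ge_3 : 3 <= mu.
Proof. unfold mu. pose proof sqrt2_bounds. lra. Qed.

(* Perron eigenvector of the transition matrix of [overlap_free], eigenvalue [mu]. *)
Definition perron (a : idx) : R := match a with I1 | I4 => sqrt 2 | I2 | I3 => 1 end.

(* Parry measure of the cylinder of [w]; the empty word is given the last letter [I1],
   which (like [I4]) has no forbidden follower, so [mass nil = sqrt 2]. *)
Definition mass (w : list idx) : R := perron (last w I1) / mu ^ length w.

Lemma mass_nil : mass nil = sqrt 2.
Proof. unfold mass. simpl. field. Qed.

Lemma perron_bounds a : 0 < perron a <= sqrt 2.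
Proof. pose proof sqrt2_bounds. destruct a; simpl; lra. Qed.

Lemma mass_pos w : 0 < mass w.
Proof.
  pose proof (perron_bounds (last w I1)). pose proof mu_ge_3.
  apply Rdiv_lt_0_compat; [lra|apply pow_lt; lra].
Qed.

Definition child_term (F : list idx -> R) (v : list idx) (b : idx) : R :=
  if is_overlap (last v I1) b then 0 else F (v ++ b :: nil).

Definition children_sum (F : list idx -> R) (v : list idx) : R :=
  child_term F v I1 + child_term F v I2 + child_term F v I3 + child_term F v I4.

Lemma children_sum_le F G v :
  (forall b, is_overlap (last v I1) b = false -> F (v ++ b :: nil) <= G (v ++ b :: nil)) ->
  children_sum F v <= children_sum G v.
Proof.
  intro H. unfold children_sum, child_term.
  assert (K : forall b, (if is_overlap (last v I1) b then 0 else F (v ++ b :: nil)) <=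
                        (if is_overlap (last v I1) b then 0 else G (v ++ b :: nil)))
    by (intro b; destruct (is_overlap (last v I1) b) eqn:E; [lra|auto]).
  pose proof (K I1); pose proof (K I2); pose proof (K I3); pose proof (K I4). lra.
Qed.

Lemma children_sum_plus F G v : children_sum (fun u => F u + G u) v = children_sum F v + children_sum G v.
Proof. unfold children_sum, child_term. destruct (last v I1); simpl; ring. Qed.

Lemma children_sum_zero v : children_sum (fun _ => 0) v = 0.
Proof. unfold children_sum, child_term. destruct (last v I1); simpl; ring. Qed.

Lemma perron_eigenvector a :
  (if is_overlap a I1 then 0 else perron I1) + (if is_overlap a I2 then 0 else perron I2) +
  (if is_overlap a I3 then 0 else perron I3) + (if is_overlap a I4 then 0 else perron I4) =
  mu * perron a.
Proof. pose proof sqrt2_bounds. unfold mu. destruct a; simpl; nra. Qed.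

Lemma children_sum_mass v : children_sum mass v = mass v.
Proof.
  pose proof mu_ge_3. assert (0 < mu ^ length v) by (apply pow_lt; lra).
  assert (Hchild : forall b, child_term mass v b =
      (if is_overlap (last v I1) b then 0 else perron b) / (mu * mu ^ length v)).
  { intro b. unfold child_term, mass. rewrite last_last, length_app, Nat.add_comm.
    destruct (is_overlap (last v I1) b); simpl; field; lra. }
  unfold children_sum. rewrite !Hchild.
  transitivity ((mu * perron (last v I1)) / (mu * mu ^ length v)); [|unfold mass; field; lra].
  rewrite <- perron_eigenvector. field. lra.
Qed.

Lemma few_overlap_words_growth (B : nat) (rho : R) : mu < rho -> exists C, 0 < C /\
  forall n, INR (length (filter (fun w => Nat.leb (overlap_count w) B) (words (S n)))) <= C * rho ^ S n.
Proof.
  intro Hrho. pose proof sqrt2_bounds. unfold mu in Hrho.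
  assert (Hrr : 2 < (rho - 2) ^ 2) by (simpl; nra).
  set (eps := Rmin 1 (((rho - 2) ^ 2 - 2) / 2)).
  assert (He0 : 0 < eps) by (apply Rmin_glb_lt; lra).
  assert (He1 : eps <= 1) by apply Rmin_l.
  assert (He2 : 2 + 2 * eps <= (rho - 2) ^ 2)
    by (pose proof (Rmin_r 1 (((rho - 2) ^ 2 - 2) / 2)); unfold eps in *; lra).
  assert (HeB : 0 < eps ^ B) by (apply pow_lt; auto).
  assert (HeB' : 0 < / eps ^ B) by (apply Rinv_0_lt_compat; auto).
  exists (2 * / eps ^ B). split; [lra|]. intro n. eapply Rle_trans.
  - apply (length_filter_le_sum_list _ (fun w => / eps ^ B * eps ^ overlap_count w)).
    + intro w. assert (0 <= eps ^ overlap_count w) by (apply pow_le; lra). nra.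
    + intros w Hw. apply Nat.leb_le in Hw.
      assert (eps ^ B <= eps ^ overlap_count w) by (apply pow_le_pow_of_le_one; [lra|auto]).
      apply (Rmult_le_reg_l (eps ^ B)); auto. rewrite <- Rmult_assoc, Rinv_r by lra. lra.
  - rewrite sum_list_scal, sum_list_words_S.
    pose proof (overlap_weighted_words_le eps rho ltac:(lra) ltac:(lra) He2 n) as E.
    pose proof (E I1). pose proof (E I2). pose proof (E I3). pose proof (E I4).
    simpl overlap_supersolution in *. rewrite <- tech_pow_Rmult.
    assert (0 < rho ^ n) by (apply pow_lt; lra). nra.
Qed.

Definition is_prefix (u v : list idx) : Prop :=
  (length u <= length v)%nat /\ forall i, (i < length u)%nat -> nth i u I1 = nth i v I1.

Lemma is_prefix_refl v : is_prefix v v.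
Proof. split; auto. Qed.

Lemma is_prefix_nil v : is_prefix nil v.
Proof. split; simpl; intros; lia. Qed.

Lemma is_prefix_snoc w v b : is_prefix w v -> is_prefix w (v ++ b :: nil).
Proof.
  intros [H1 H2]. split; [rewrite length_app; simpl; lia|].
  intros i Hi. rewrite app_nth1 by lia. auto.
Qed.

Lemma is_prefix_snoc_l w v b : is_prefix (v ++ b :: nil) w -> is_prefix v w.
Proof.
  intros [H1 H2]. rewrite length_app in H1, H2. simpl in *. split; [lia|].
  intros i Hi. rewrite <- H2 by lia. rewrite app_nth1; auto.
Qed.

Lemma is_prefix_snoc_r w v b : is_prefix w (v ++ b :: nil) -> is_prefix w v \/ w = v ++ b :: nil.
Proof.
  intros [H1 H2]. rewrite length_app in H1. simpl in H1.
  destruct (Nat.le_gt_cases (length w) (length v)).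
  - left. split; auto. intros i Hi. rewrite H2 by auto. apply app_nth1. lia.
  - right. apply nth_ext with (d := I1) (d' := I1); [rewrite length_app; simpl; lia|].
    intros. apply H2. auto.
Qed.

(* The mass of the intersection of the cylinders of [w] and [v]. *)
Definition meet_mass (w v : list idx) : R :=
  if excluded_middle_informative (is_prefix w v) then mass v
  else if excluded_middle_informative (is_prefix v w) then mass w else 0.

Lemma meet_mass_nonneg w v : 0 <= meet_mass w v.
Proof.
  unfold meet_mass. pose proof (mass_pos v). pose proof (mass_pos w).
  repeat destruct (excluded_middle_informative _); lra.
Qed.

Lemma meet_mass_nil w : meet_mass w nil = mass w.
Proof.
  unfold meet_mass. destruct (excluded_middle_informative _) as [[Hp _]|_].
  - simpl in Hp. destruct w; [reflexivity|simpl in Hp; lia].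
  - destruct (excluded_middle_informative _) as [_|N]; auto. exfalso. apply N, is_prefix_nil.
Qed.

(* If [v] is a proper prefix of [w], only the child of [v] along [w] meets [w]. *)
Lemma children_sum_meet_mass_proper w v :
  is_prefix v w -> ~ is_prefix w v -> children_sum (meet_mass w) v <= mass w.
Proof.
  intros Hvw Hwv.
  assert (Hlt : (length v < length w)%nat).
  { destruct Hvw as [H1 H2]. destruct (Nat.eq_dec (length v) (length w)); [|lia].
    exfalso. apply Hwv. split; [lia|]. intros i Hi. symmetry. apply H2. lia. }
  set (b0 := nth (length v) w I1).
  assert (Hb : forall b, child_term (meet_mass w) v b <= if idx_eq_dec b b0 then mass w else 0).
  { intro b. unfold child_term. pose proof (mass_pos w).
    destruct (is_overlap (last v I1) b); [destruct (idx_eq_dec b b0); lra|].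
    unfold meet_mass. destruct (excluded_middle_informative _) as [Hp|Hp].
    - destruct (is_prefix_snoc_r _ _ _ Hp) as [Hp2|Hp2]; [contradiction|].
      destruct (idx_eq_dec b b0) as [_|ne]; [rewrite Hp2; lra|].
      exfalso. apply ne. unfold b0. rewrite Hp2, nth_middle. reflexivity.
    - destruct (excluded_middle_informative _) as [[_ Hp2]|Hp2];
        destruct (idx_eq_dec b b0) as [_|ne]; try lra.
      exfalso. apply ne. unfold b0. rewrite <- Hp2; [symmetry; apply nth_middle|].
      rewrite length_app; simpl; lia. }
  unfold children_sum. pose proof (Hb I1). pose proof (Hb I2). pose proof (Hb I3). pose proof (Hb I4).
  pose proof (mass_pos w). clearbody b0. destruct b0; simpl in *; lra.
Qed.

Lemma children_sum_meet_mass w v : children_sum (meet_mass w) v <= meet_mass w v.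
Proof.
  unfold meet_mass at 2. destruct (excluded_middle_informative (is_prefix w v)) as [Hwv|Hwv].
  - rewrite <- children_sum_mass. apply children_sum_le. intros b _. unfold meet_mass.
    destruct (excluded_middle_informative _) as [_|N]; [lra|].
    exfalso; apply N, is_prefix_snoc; auto.
  - destruct (excluded_middle_informative (is_prefix v w)) as [Hvw|Hvw].
    + apply children_sum_meet_mass_proper; auto.
    + assert (Z : forall b, child_term (meet_mass w) v b = 0).
      { intro b. unfold child_term. destruct (is_overlap _ _); auto. unfold meet_mass.
        destruct (excluded_middle_informative _) as [Hp|Hp].
        - exfalso. destruct (is_prefix_snoc_r _ _ _ Hp) as [Hp2|Hp2]; [contradiction|].
          apply Hvw. rewrite Hp2. apply is_prefix_snoc, is_prefix_refl.
        - destruct (excluded_middle_informative _) as [Hp2|Hp2]; auto.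
          exfalso. apply Hvw. eapply is_prefix_snoc_l; eauto. }
      unfold children_sum. rewrite !Z. lra.
Qed.

Section Kraft.
Variable W : nat -> list idx.

Fixpoint cover_mass (M : nat) (v : list idx) : R :=
  match M with O => 0 | S M => cover_mass M v + meet_mass (W M) v end.

Lemma cover_mass_nonneg M v : 0 <= cover_mass M v.
Proof. induction M; simpl; [lra|]. pose proof (meet_mass_nonneg (W M) v). lra. Qed.

Lemma cover_mass_mono M M' v : (M <= M')%nat -> cover_mass M v <= cover_mass M' v.
Proof. induction 1; simpl; [lra|]. pose proof (meet_mass_nonneg (W m) v). lra. Qed.

Lemma children_sum_cover_mass M v : children_sum (cover_mass M) v <= cover_mass M v.
Proof.
  induction M; simpl.
  - rewrite children_sum_zero. lra.
  - rewrite children_sum_plus. pose proof (children_sum_meet_mass (W M) v). lra.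
Qed.

Definition well_covered (v : list idx) : Prop := exists M, mass v <= cover_mass M v.

Lemma well_covered_of_children v :
  (forall b, is_overlap (last v I1) b = false -> well_covered (v ++ b :: nil)) -> well_covered v.
Proof.
  intro H.
  assert (K : forall b, exists Mb, is_overlap (last v I1) b = false ->
                mass (v ++ b :: nil) <= cover_mass Mb (v ++ b :: nil)).
  { intro b. destruct (is_overlap (last v I1) b) eqn:E; [exists O; discriminate|].
    destruct (H b E) as [Mb HM]. eauto. }
  destruct (K I1) as [M1 H1], (K I2) as [M2 H2], (K I3) as [M3 H3], (K I4) as [M4 H4].
  exists (M1 + M2 + M3 + M4)%nat. rewrite <- children_sum_mass.
  eapply Rle_trans; [|apply children_sum_cover_mass]. apply children_sum_le. intros b Hb.
  destruct b; (eapply Rle_trans; [eauto|apply cover_mass_mono; lia]).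
Qed.

Definition bad_child (v : list idx) : idx :=
  match excluded_middle_informative
          (exists b, is_overlap (last v I1) b = false /\ ~ well_covered (v ++ b :: nil)) with
  | left H => proj1_sig (constructive_indefinite_description _ H)
  | right _ => I1
  end.

Lemma bad_child_spec v : ~ well_covered v ->
  is_overlap (last v I1) (bad_child v) = false /\ ~ well_covered (v ++ bad_child v :: nil).
Proof.
  intro Hn. unfold bad_child. destruct (excluded_middle_informative _) as [H|H].
  - destruct (constructive_indefinite_description _ H) as [b Hb]. exact Hb.
  - exfalso. apply Hn, well_covered_of_children. intros b Hb. apply NNPP. intro Hg. apply H. eauto.
Qed.

Fixpoint bad_branch (j : nat) : list idx :=
  match j with O => nil | S j => bad_branch j ++ bad_child (bad_branch j) :: nil end.

Lemma bad_branch_map_seq j : bad_branch j = map (fun i => bad_child (bad_branch i)) (seq 0 j).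
Proof. induction j as [|j IH]; [reflexivity|]. simpl bad_branch. rewrite seq_S, map_app, <- IH. reflexivity. Qed.

Hypothesis W_covers : forall b, overlap_free b -> exists n, W n = map b (seq 0 (length (W n))).

(* Koenig's lemma: otherwise the root is not well covered, and always descending to a
   badly covered child yields an overlap-free sequence with no prefix in [W]. *)
Lemma kraft_mass_inequality : exists M, sqrt 2 <= sum_f_R0 (fun n => mass (W n)) M.
Proof.
  assert (Hsum : forall M, cover_mass (S M) nil = sum_f_R0 (fun n => mass (W n)) M).
  { induction M; simpl in *; rewrite ?IHM, meet_mass_nil; [ring|reflexivity]. }
  apply NNPP. intro Hno.
  assert (Hroot : ~ well_covered nil).
  { intros [[|M] HM]; rewrite mass_nil in HM; [simpl in HM; pose proof sqrt2_bounds; lra|].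
    apply Hno. exists M. rewrite <- Hsum. exact HM. }
  assert (Hbad : forall j, ~ well_covered (bad_branch j))
    by (induction j; auto; apply bad_child_spec; auto).
  set (beta := fun i => bad_child (bad_branch i)).
  assert (Hfree : overlap_free beta).
  { intro m. replace (beta m) with (last (bad_branch (S m)) I1) by (simpl; rewrite last_last; auto).
    apply (bad_child_spec (bad_branch (S m)) (Hbad (S m))). }
  destruct (W_covers beta Hfree) as [n Hn].
  apply (Hbad (length (W n))). exists (S n). rewrite bad_branch_map_seq. fold beta. rewrite <- Hn.
  simpl. unfold meet_mass. destruct (excluded_middle_informative _) as [_|N];
    [|exfalso; apply N, is_prefix_refl].
  pose proof (cover_mass_nonneg n (W n)). lra.
Qed.

End Kraft.

(** * Codings *)

Definition shift (m : nat) (c : nat -> idx) : nat -> idx := fun n => c (m + n)%nat.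

Lemma shift_shift m p c : shift m (shift p c) = shift (p + m) c.
Proof. apply functional_extensionality. intro n. unfold shift. f_equal. lia. Qed.

Lemma overlap_free_shift p u : overlap_free u -> overlap_free (shift p u).
Proof. intros H m. unfold shift. rewrite Nat.add_succ_r. apply H. Qed.

Section Coding.
Variable lam : R.
Hypothesis lam_pos : 0 < lam.
Hypothesis lam_lt_quarter : lam < 1 / 4.
Hypothesis gap_pos : 0 < 1 - 5 * lam + lam ^ 2.

Definition trans (i : idx) : R :=
  match i with I1 => 0 | I2 => 2 * lam | I3 => 3 * lam - lam ^ 2 | I4 => 1 - lam end.

Lemma ifs_affine i x : ifs lam i x = lam * x + trans i.
Proof. destruct i; simpl; ring. Qed.

Lemma trans_bounds i : 0 <= trans i <= 1 - lam.
Proof. destruct i; simpl; nra. Qed.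

Lemma compose_affine c n y : compose lam c n y = compose lam c n 0 + lam ^ n * y.
Proof.
  revert y. induction n as [|n IH]; intros y; simpl; [ring|].
  rewrite (IH (ifs lam (c n) y)), (IH (ifs lam (c n) 0)), !ifs_affine. ring.
Qed.

Lemma compose_S_0 c n : compose lam c (S n) 0 = compose lam c n 0 + lam ^ n * trans (c n).
Proof. simpl. rewrite compose_affine, ifs_affine. ring. Qed.

Lemma compose_ext c c' n y :
  (forall j, (j < n)%nat -> c j = c' j) -> compose lam c n y = compose lam c' n y.
Proof.
  revert y. induction n as [|n IH]; intros y H; simpl; auto.
  rewrite H by lia. apply IH. intros; apply H; lia.
Qed.

Lemma compose_inj c n y y' : compose lam c n y = compose lam c n y' -> y = y'.
Proof.
  rewrite (compose_affine c n y), (compose_affine c n y'). intro H.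
  assert (0 < lam ^ n) by (apply pow_lt; auto).
  apply (Rmult_eq_reg_l (lam ^ n)); lra.
Qed.

Lemma compose_growing c : Un_growing (fun n => compose lam c n 0).
Proof.
  intro n. cbv beta. rewrite compose_S_0. pose proof (trans_bounds (c n)).
  pose proof (pow_lt lam n lam_pos). nra.
Qed.

Lemma compose_le c n : compose lam c n 0 <= 1 - lam ^ n.
Proof.
  induction n as [|n IH]; [simpl; lra|]. rewrite compose_S_0.
  pose proof (trans_bounds (c n)). pose proof (pow_lt lam n lam_pos). simpl. nra.
Qed.

Lemma compose_bounded c : has_ub (fun n => compose lam c n 0).
Proof.
  exists 1. intros x [i ->]. pose proof (compose_le c i). pose proof (pow_lt lam i lam_pos). lra.
Qed.

Definition pi (c : nat -> idx) : R := proj1_sig (growing_cv _ (compose_growing c) (compose_bounded c)).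

Lemma pi_cv c : Un_cv (fun n => compose lam c n 0) (pi c).
Proof. unfold pi. destruct (growing_cv _ _ _). auto. Qed.

Lemma is_coding_iff x c : is_coding lam x c <-> pi c = x.
Proof.
  split; intro H.
  - eapply UL_sequence; [apply pi_cv|exact H].
  - subst. apply pi_cv.
Qed.

Lemma pi_bounds c : 0 <= pi c <= 1.
Proof.
  split.
  - eapply Rle_cv_lim; [|apply Un_cv_const|apply pi_cv]. intro n.
    induction n as [|n IH]; simpl; [lra|]. pose proof (compose_growing c n). simpl in *. lra.
  - eapply Rle_cv_lim; [|apply pi_cv|apply Un_cv_const]. intro n.
    pose proof (compose_le c n). pose proof (pow_lt lam n lam_pos). lra.
Qed.

Lemma compose_S_front c n y : compose lam c (S n) y = ifs lam (c O) (compose lam (shift 1 c) n y).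
Proof.
  revert y. induction n as [|n IH]; intro y; [reflexivity|].
  change (compose lam c (S (S n)) y) with (compose lam c (S n) (ifs lam (c (S n)) y)).
  rewrite IH. reflexivity.
Qed.

Lemma pi_shift1 c : pi c = lam * pi (shift 1 c) + trans (c O).
Proof.
  apply (UL_sequence (fun n => compose lam c (S n) 0)).
  - eapply Un_cv_ext; [|exact (CV_shift' _ 1 _ (pi_cv c))]. intro n. cbv beta. rewrite Nat.add_1_r. reflexivity.
  - eapply (Un_cv_ext (fun n => lam * compose lam (shift 1 c) n 0 + trans (c O))).
    + intro n. rewrite compose_S_front, ifs_affine. reflexivity.
    + apply CV_plus; [|apply Un_cv_const].
      apply (CV_mult (fun _ => lam)); [apply Un_cv_const|apply pi_cv].
Qed.

Lemma pi_split c m : pi c = compose lam c m (pi (shift m c)).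
Proof.
  induction m as [|m IH]; [reflexivity|].
  rewrite IH. simpl. f_equal. rewrite pi_shift1, ifs_affine, shift_shift, Nat.add_1_r. f_equal.
  unfold shift. rewrite Nat.add_0_r. reflexivity.
Qed.

Lemma pi_shift2 c : pi c = trans (c O) + lam * trans (c 1%nat) + lam ^ 2 * pi (shift 2 c).
Proof. rewrite (pi_split c 2). simpl. rewrite !ifs_affine. ring. Qed.

Lemma pi_eq_of_prefix c d m :
  (forall q, (q < m)%nat -> c q = d q) -> pi (shift m c) = pi (shift m d) -> pi c = pi d.
Proof. intros Hq Ht. rewrite (pi_split c m), (pi_split d m), Ht. apply compose_ext. auto. Qed.

Lemma pi_shift_eq_of_prefix c d m :
  (forall q, (q < m)%nat -> c q = d q) -> pi c = pi d -> pi (shift m c) = pi (shift m d).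
Proof.
  intros Hq He. rewrite (pi_split c m), (pi_split d m), (compose_ext c d m) in He by auto.
  eapply compose_inj; eauto.
Qed.

Lemma dist_pi_prefix c d m :
  (forall q, (q < m)%nat -> c q = d q) -> Rabs (pi c - pi d) = lam ^ m * Rabs (pi (shift m c) - pi (shift m d)).
Proof.
  intro H. rewrite (pi_split c m), (pi_split d m), (compose_ext c d m _ H).
  rewrite (compose_affine d m (pi (shift m c))), (compose_affine d m (pi (shift m d))).
  replace (_ - _) with (lam ^ m * (pi (shift m c) - pi (shift m d))) by ring.
  rewrite Rabs_mult, (Rabs_right (lam ^ m)) by (left; apply pow_lt; auto). reflexivity.
Qed.

Lemma dist_pi_le_of_prefix c d m :
  (forall q, (q < m)%nat -> c q = d q) -> Rabs (pi c - pi d) <= lam ^ m.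
Proof.
  intro H. rewrite (dist_pi_prefix c d m H).
  pose proof (pi_bounds (shift m c)). pose proof (pi_bounds (shift m d)).
  assert (Rabs (pi (shift m c) - pi (shift m d)) <= 1) by (apply Rabs_le; lra).
  pose proof (pow_lt lam m lam_pos). nra.
Qed.

Lemma codings_differ_at_start c c' : pi c = pi c' -> c O <> c' O ->
  ((c O = I2 /\ c 1%nat = I4 /\ c' O = I3 /\ c' 1%nat = I1) \/
   (c O = I3 /\ c 1%nat = I1 /\ c' O = I2 /\ c' 1%nat = I4)) /\ pi (shift 2 c) = pi (shift 2 c').
Proof.
  intros He Hne. rewrite (pi_shift2 c), (pi_shift2 c') in He.
  pose proof (pi_bounds (shift 2 c)) as Z. pose proof (pi_bounds (shift 2 c')) as Z'.
  set (z := pi (shift 2 c)) in *. set (z' := pi (shift 2 c')) in *. clearbody z z'.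
  assert (Lz : 0 <= lam ^ 2 * z <= lam ^ 2) by nra. assert (Lz' : 0 <= lam ^ 2 * z' <= lam ^ 2) by nra.
  assert (L2 : 0 < lam ^ 2 < lam / 4) by nra.
  assert (Hz : lam ^ 2 * z = lam ^ 2 * z' -> z = z') by (intro E; apply Rmult_eq_reg_l in E; lra).
  pose proof (trans_bounds (c 1%nat)). pose proof (trans_bounds (c' 1%nat)).
  destruct (c O), (c' O); try congruence; cbn [trans] in He; try (exfalso; nra);
    destruct (c 1%nat), (c' 1%nat); cbn [trans] in *; try (exfalso; nra);
    (split; [tauto|apply Hz; nra]).
Qed.

Lemma codings_differ_at c c' p : pi c = pi c' -> (forall q, (q < p)%nat -> c q = c' q) -> c p <> c' p ->
  ((c p = I2 /\ c (S p) = I4 /\ c' p = I3 /\ c' (S p) = I1) \/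
   (c p = I3 /\ c (S p) = I1 /\ c' p = I2 /\ c' (S p) = I4)) /\
  pi (shift (S (S p)) c) = pi (shift (S (S p)) c').
Proof.
  intros He Hq Hne.
  destruct (codings_differ_at_start (shift p c) (shift p c')) as [H1 H2].
  - apply pi_shift_eq_of_prefix; auto.
  - unfold shift. rewrite Nat.add_0_r. auto.
  - rewrite !shift_shift, Nat.add_comm in H2. unfold shift in H1.
    rewrite !Nat.add_0_r, !Nat.add_1_r in H1. auto.
Qed.

Lemma overlap_at_first_difference c c' p : pi c = pi c' ->
  (forall q, (q < p)%nat -> c q = c' q) -> c p <> c' p -> is_overlap (c p) (c (S p)) = true.
Proof. intros. destruct (codings_differ_at c c' p) as [[[-> [-> _]]|[-> [-> _]]] _]; auto. Qed.

Lemma overlap_free_coding_unique u c : overlap_free u -> pi c = pi u -> c = u.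
Proof.
  intros Hu He. apply NNPP. intro Hne. destruct (first_difference u c) as [p [Hp Hq]]; [auto|].
  assert (is_overlap (u p) (u (S p)) = true) by (apply (overlap_at_first_difference u c p); auto).
  rewrite Hu in H. discriminate.
Qed.

Definition exchange_letter (a : idx) : idx := match a with I1 => I4 | I2 => I3 | I3 => I2 | I4 => I1 end.

Definition exchange (m : nat) (c : nat -> idx) : nat -> idx :=
  fun n => if Nat.eqb n m then exchange_letter (c m)
           else if Nat.eqb n (S m) then exchange_letter (c (S m)) else c n.

Lemma exchange_at m c : exchange m c m = exchange_letter (c m).
Proof. unfold exchange. rewrite Nat.eqb_refl. reflexivity. Qed.

Lemma exchange_letter_neq a : exchange_letter a <> a.
Proof. destruct a; discriminate. Qed.

Lemma pi_exchange m c : is_overlap (c m) (c (S m)) = true -> pi (exchange m c) = pi c.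
Proof.
  intro Hb. apply (pi_eq_of_prefix _ _ m).
  { intros j Hj. unfold exchange. destruct (Nat.eqb_spec j m); [lia|].
    destruct (Nat.eqb_spec j (S m)); [lia|auto]. }
  rewrite (pi_shift2 (shift m (exchange m c))), (pi_shift2 (shift m c)), !shift_shift.
  replace (pi (shift (m + 2) (exchange m c))) with (pi (shift (m + 2) c)).
  2:{ f_equal. apply functional_extensionality. intro n. unfold shift, exchange.
      destruct (Nat.eqb_spec (m + 2 + n) m); [lia|].
      destruct (Nat.eqb_spec (m + 2 + n) (S m)); [lia|auto]. }
  unfold shift, exchange. rewrite Nat.add_0_r, Nat.add_1_r, Nat.eqb_refl, Nat.eqb_refl.
  destruct (Nat.eqb_spec (S m) m); [lia|].
  destruct (c m), (c (S m)); try discriminate; cbn [exchange_letter trans]; ring.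
Qed.

(* The exchanges at the overlaps of a coding are pairwise distinct codings of the same point. *)
Lemma overlaps_lt_codings x (l : list (nat -> idx)) c n :
  NoDup l -> (forall d, pi d = x <-> In d l) -> pi c = x ->
  (length (filter (fun m => is_overlap (c m) (c (S m))) (seq 0 n)) < length l)%nat.
Proof.
  intros Hnd Hl Hc.
  set (M := filter (fun m => is_overlap (c m) (c (S m))) (seq 0 n)).
  assert (HM : forall m, In m M -> is_overlap (c m) (c (S m)) = true)
    by (intros m Hm; apply filter_In in Hm; tauto).
  assert (Hexch : forall a b, In a M -> In b M -> exchange a c = exchange b c -> a = b).
  { intros a b Ha Hb E. destruct (Nat.eq_dec a b); auto. exfalso.
    assert (E2 := f_equal (fun g => g a) E). simpl in E2. rewrite exchange_at in E2.
    unfold exchange in E2. destruct (Nat.eqb_spec a b); [contradiction|].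
    destruct (Nat.eqb_spec a (S b)).
    - subst a. pose proof (HM _ Ha). pose proof (HM _ Hb).
      destruct (c b), (c (S b)); try discriminate; destruct (c (S (S b))); discriminate.
    - apply (exchange_letter_neq (c a)); auto. }
  assert (Hnd' : NoDup (c :: map (fun m => exchange m c) M)).
  { constructor.
    - intro Hin. apply in_map_iff in Hin. destruct Hin as [m [E Hm]].
      assert (E2 := f_equal (fun g => g m) E). simpl in E2. rewrite exchange_at in E2.
      apply (exchange_letter_neq (c m)); auto.
    - apply NoDup_map_NoDup_ForallPairs; [exact Hexch|apply NoDup_filter, seq_NoDup]. }
  assert (Hle := NoDup_incl_length Hnd' (l' := l)). simpl in Hle. rewrite length_map in Hle.
  apply Hle. intros d [<-|Hd]; apply Hl; auto.
  apply in_map_iff in Hd. destruct Hd as [m [<- Hm]]. rewrite pi_exchange; auto.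
Qed.

Definition splice (n0 : nat) (f : nat -> idx) (a b : idx) (t : nat -> idx) : nat -> idx :=
  fun n => if Nat.ltb n n0 then f n else if Nat.eqb n n0 then a
           else if Nat.eqb n (S n0) then b else t (n - S (S n0))%nat.

Lemma shift_splice n0 f a b t : shift (S (S n0)) (splice n0 f a b t) = t.
Proof.
  apply functional_extensionality. intro n. unfold shift, splice.
  destruct (Nat.ltb_spec (S (S n0) + n) n0); [lia|].
  destruct (Nat.eqb_spec (S (S n0) + n) n0); [lia|].
  destruct (Nat.eqb_spec (S (S n0) + n) (S n0)); [lia|]. f_equal. lia.
Qed.

Lemma splice_at n0 f a b t : splice n0 f a b t n0 = a.
Proof. unfold splice. rewrite Nat.ltb_irrefl, Nat.eqb_refl. reflexivity. Qed.

Lemma splice_at_S n0 f a b t : splice n0 f a b t (S n0) = b.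
Proof.
  unfold splice. destruct (Nat.ltb_spec (S n0) n0); [lia|].
  destruct (Nat.eqb_spec (S n0) n0); [lia|]. rewrite Nat.eqb_refl. reflexivity.
Qed.

Lemma splice_eta n0 d : d = splice n0 d (d n0) (d (S n0)) (shift (S (S n0)) d).
Proof.
  apply functional_extensionality. intro n. unfold splice, shift.
  destruct (Nat.ltb_spec n n0); auto. destruct (Nat.eqb_spec n n0); [subst; auto|].
  destruct (Nat.eqb_spec n (S n0)); [subst; auto|]. f_equal. lia.
Qed.

Lemma splice_ext n0 f f' a b t : (forall q, (q < n0)%nat -> f q = f' q) ->
  splice n0 f a b t = splice n0 f' a b t.
Proof.
  intro H. apply functional_extensionality. intro n. unfold splice.
  destruct (Nat.ltb_spec n n0); auto.
Qed.

Lemma splice_inj n0 f a b t t' : splice n0 f a b t = splice n0 f a b t' -> t = t'.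
Proof. intro H. rewrite <- (shift_splice n0 f a b t), <- (shift_splice n0 f a b t'), H. auto. Qed.

Lemma splice_24_neq_31 n0 f t t' : splice n0 f I2 I4 t <> splice n0 f I3 I1 t'.
Proof. intro H. assert (E := f_equal (fun g => g n0) H). simpl in E. rewrite !splice_at in E. discriminate. Qed.

Lemma pi_splice n0 f a b t d : (forall q, (q < n0)%nat -> d q = f q) -> d n0 = a -> d (S n0) = b ->
  pi t = pi (shift (S (S n0)) d) -> pi (splice n0 f a b t) = pi d.
Proof.
  intros H1 H2 H3 H4. apply (pi_eq_of_prefix _ _ (S (S n0))); [|rewrite shift_splice; auto].
  intros j Hj. unfold splice.
  destruct (Nat.ltb_spec j n0); [symmetry; auto|].
  destruct (Nat.eqb_spec j n0); [subst; auto|].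
  destruct (Nat.eqb_spec j (S n0)); [subst; auto|lia].
Qed.

Definition splits (x : R) (n0 : nat) (f : nat -> idx) (y : R) : Prop :=
  forall d, pi d = x <-> exists t, pi t = y /\ (d = splice n0 f I2 I4 t \/ d = splice n0 f I3 I1 t).

Lemma splits_of_codings x n0 d1 d2 :
  pi d1 = x -> pi d2 = x ->
  (forall d q, pi d = x -> (q < n0)%nat -> d q = d1 q) ->
  d1 n0 = I2 -> d1 (S n0) = I4 -> d2 n0 = I3 -> d2 (S n0) = I1 ->
  pi (shift (S (S n0)) d1) = pi (shift (S (S n0)) d2) ->
  splits x n0 d1 (pi (shift (S (S n0)) d1)).
Proof.
  intros E1 E2 Hag A1 A2 B1 B2 Ht d. split.
  - intro Ed. exists (shift (S (S n0)) d).
    assert (Hq : forall q, (q < n0)%nat -> d q = d1 q) by (intros; apply Hag; auto).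
    assert (Hq2 : forall q, (q < n0)%nat -> d q = d2 q) by (intros; rewrite (Hag d2); auto).
    destruct (idx_eq_dec (d n0) I2) as [e2|n2].
    + destruct (codings_differ_at d d2 n0 ltac:(congruence) Hq2 ltac:(congruence))
        as [[[X1 [X2 _]]|[X1 _]] X3]; try congruence.
      split; [rewrite X3; auto|]. left. rewrite (splice_eta n0 d) at 1. rewrite X1, X2.
      apply splice_ext. auto.
    + destruct (codings_differ_at d d1 n0 ltac:(congruence) Hq ltac:(congruence))
        as [[[X1 _]|[X1 [X2 _]]] X3]; try congruence.
      split; [rewrite X3; auto|]. right. rewrite (splice_eta n0 d) at 1. rewrite X1, X2.
      apply splice_ext. auto.
  - intros [t [Et [-> | ->]]].
    + rewrite <- E1. apply pi_splice; auto.
    + rewrite <- E2. apply pi_splice; [intros q Hq; apply (Hag d2); auto|auto|auto|congruence].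
Qed.

(* Split at the first position where two codings of [x] differ. *)
Lemma splits_of_two_codings x c1 c2 : pi c1 = x -> pi c2 = x -> c1 <> c2 ->
  exists n0 f y, (exists t, pi t = y) /\ splits x n0 f y.
Proof.
  intros Hc1 Hc2 Hne.
  destruct (least_witness (fun n => exists d1 d2, pi d1 = x /\ pi d2 = x /\ d1 n <> d2 n))
    as [n0 [[d1 [d2 [E1 [E2 Hd]]]] Hmin]].
  { destruct (first_difference c1 c2 Hne) as [n [Hn _]]. exists n, c1, c2. auto. }
  assert (Hag : forall d q, pi d = x -> (q < n0)%nat -> d q = d1 q).
  { intros d q Ed Hq. apply NNPP. intro. apply (Hmin q Hq). exists d, d1; auto. }
  destruct (codings_differ_at d1 d2 n0 ltac:(congruence)) as [[[A1 [A2 [B1 B2]]]|[A1 [A2 [B1 B2]]]] Ht];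
    auto; [intros; symmetry; apply Hag; auto| |].
  - exists n0, d1, (pi (shift (S (S n0)) d1)). split; [eauto|].
    apply (splits_of_codings x n0 d1 d2); auto.
  - exists n0, d2, (pi (shift (S (S n0)) d2)). split; [eauto|].
    apply (splits_of_codings x n0 d2 d1); auto. intros. rewrite (Hag d), (Hag d2); auto.
Qed.

Lemma splits_codings_list x n0 f y (lt : list (nat -> idx)) : splits x n0 f y ->
  NoDup lt -> (forall t, pi t = y <-> In t lt) ->
  let l := map (splice n0 f I2 I4) lt ++ map (splice n0 f I3 I1) lt in
  NoDup l /\ forall d, pi d = x <-> In d l.
Proof.
  intros Hs Hndt Hlt l. split.
  - apply NoDup_app.
    + apply NoDup_map_NoDup_ForallPairs; auto. intros a b _ _. apply splice_inj.
    + apply NoDup_map_NoDup_ForallPairs; auto. intros a b _ _. apply splice_inj.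
    + intros a Ha Hb. apply in_map_iff in Ha, Hb. destruct Ha as [t [<- _]], Hb as [t' [E _]].
      apply (splice_24_neq_31 n0 f t t'). auto.
  - intro d. rewrite (Hs d). unfold l. rewrite in_app_iff, !in_map_iff. split.
    + intros [t [Et [-> | ->]]]; [left|right]; exists t; split; auto; apply Hlt; auto.
    + intros [[t [<- Ht]]|[t [<- Ht]]]; exists t; (split; [apply Hlt; auto|auto]).
Qed.

Lemma splits_length_codings x n0 f y (l lt : list (nat -> idx)) : splits x n0 f y ->
  NoDup l -> (forall d, pi d = x <-> In d l) -> NoDup lt -> (forall t, pi t = y <-> In t lt) ->
  length l = (2 * length lt)%nat.
Proof.
  intros Hs Hnd Hl Hndt Hlt.
  destruct (splits_codings_list x n0 f y lt Hs Hndt Hlt) as [Hnd' Hl'].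
  rewrite (NoDup_same_length l _ Hnd Hnd'), length_app, !length_map; [lia|].
  intro d. rewrite <- Hl, <- Hl'. tauto.
Qed.

Lemma splits_finite_codings x n0 f y (l : list (nat -> idx)) : splits x n0 f y ->
  NoDup l -> (forall d, pi d = x <-> In d l) ->
  exists lt, NoDup lt /\ forall t, pi t = y <-> In t lt.
Proof.
  intros Hs Hnd Hl. exists (map (shift (S (S n0))) (filter (fun d => if idx_eq_dec (d n0) I2 then true else false) l)).
  assert (Hform : forall d, In d l -> (if idx_eq_dec (d n0) I2 then true else false) = true ->
                    d = splice n0 f I2 I4 (shift (S (S n0)) d)).
  { intros d Hd1 Hd2. apply Hl, Hs in Hd1. destruct Hd1 as [t [Et [-> | ->]]].
    - rewrite shift_splice. auto.
    - rewrite splice_at in Hd2. discriminate. }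
  split.
  - apply NoDup_map_NoDup_ForallPairs; [|apply NoDup_filter; auto].
    intros a b Ha Hb E. apply filter_In in Ha, Hb.
    rewrite (Hform a), (Hform b) by tauto. rewrite E. auto.
  - intro t. rewrite in_map_iff. split.
    + intro Et. exists (splice n0 f I2 I4 t). split; [apply shift_splice|].
      apply filter_In. split; [apply Hl, Hs; eauto|rewrite splice_at; auto].
    + intros [d [<- Hd]]. apply filter_In in Hd. destruct Hd as [Hd1 Hd2].
      rewrite (Hform d Hd1 Hd2), shift_splice in *. apply Hl, Hs in Hd1.
      destruct Hd1 as [t [Et [E2 | E2]]].
      * rewrite E2, shift_splice. auto.
      * rewrite E2, splice_at in Hd2. discriminate.
Qed.

Lemma codings_count_pow2 L x (l : list (nat -> idx)) :
  length l = L -> NoDup l -> (forall c, pi c = x <-> In c l) -> (1 <= L)%nat ->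
  exists k, L = (2 ^ k)%nat.
Proof.
  revert x l. induction L as [L IH] using (well_founded_induction Wf_nat.lt_wf).
  intros x l HL Hnd Hl H1.
  destruct (classic (exists c1 c2, pi c1 = x /\ pi c2 = x /\ c1 <> c2)) as [[c1 [c2 [E1 [E2 Hne]]]]|Hone].
  - destruct (splits_of_two_codings x c1 c2 E1 E2 Hne) as [n0 [f [y [[t0 Ht0] Hs]]]].
    destruct (splits_finite_codings x n0 f y l Hs Hnd Hl) as [lt [Hndt Hlt]].
    pose proof (splits_length_codings x n0 f y l lt Hs Hnd Hl Hndt Hlt) as Hlen.
    assert (In t0 lt) by (apply Hlt; auto). destruct lt as [|t lt']; [contradiction|].
    destruct (IH (length (t :: lt')) ltac:(simpl in *; lia) y (t :: lt') eq_refl Hndt Hlt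
      ltac:(simpl; lia)) as [k Hk].
    exists (S k). simpl. lia.
  - exists O. simpl. destruct l as [|a [|b l']]; simpl in HL; try lia.
    exfalso. inversion Hnd as [|? ? Hab]. apply Hab. left. symmetry.
    apply NNPP. intro Hne. apply Hone. exists a, b. split; [apply Hl; simpl; auto|].
    split; [apply Hl; simpl; auto|auto].
Qed.

(** * Points with infinitely many codings *)

Definition infinitely_coded (y : R) : Prop := ~ exists l : list (nat -> idx), forall c, pi c = y -> In c l.

Lemma infinitely_coded_has_coding y : infinitely_coded y -> exists t, pi t = y.
Proof. intro H. apply NNPP. intro H2. apply H. exists nil. intros c Hc. apply H2. eauto. Qed.

Lemma infinitely_coded_splits x : infinitely_coded x ->
  exists n0 f y, infinitely_coded y /\ splits x n0 f y.
Proof.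
  intro Hx. destruct (infinitely_coded_has_coding x Hx) as [c Hc].
  destruct (classic (exists c', pi c' = x /\ c <> c')) as [[c' [Hc' Hne]]|Hone].
  - destruct (splits_of_two_codings x c c' Hc Hc' Hne) as [n0 [f [y [_ Hs]]]].
    exists n0, f, y. split; auto. intros [l Hl]. apply Hx.
    exists (map (splice n0 f I2 I4) l ++ map (splice n0 f I3 I1) l). intros d Hd.
    apply Hs in Hd. destruct Hd as [t [Et [-> | ->]]]; apply in_app_iff; [left|right]; apply in_map; auto.
  - exfalso. apply Hx. exists (c :: nil). intros d Hd. left.
    apply NNPP. intro Hne. apply Hone. eauto.
Qed.

Definition prepend (len : nat) (w : nat -> idx) (t : nat -> idx) : nat -> idx :=
  fun n => if Nat.ltb n len then w n else t (n - len)%nat.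

Lemma prepend_splice len w n0 f a b t :
  prepend (len + S (S n0)) (prepend len w (splice n0 f a b (fun _ => I1))) t =
  prepend len w (splice n0 f a b t).
Proof.
  apply functional_extensionality. intro n. unfold prepend, splice.
  destruct (Nat.ltb_spec n (len + S (S n0))), (Nat.ltb_spec n len); auto; try lia.
  - destruct (Nat.ltb_spec (n - len) n0); auto. destruct (Nat.eqb_spec (n - len) n0); auto.
    destruct (Nat.eqb_spec (n - len) (S n0)); auto. lia.
  - destruct (Nat.ltb_spec (n - len) n0); [lia|]. destruct (Nat.eqb_spec (n - len) n0); [lia|].
    destruct (Nat.eqb_spec (n - len) (S n0)); [lia|]. f_equal. lia.
Qed.

Record stage := Stage { stage_len : nat; stage_word : nat -> idx; stage_rest : R }.

(* Cantor's diagonal argument: an infinitely coded point has a coding outside any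
   sequence [e] of codings, built by successive splittings, choosing at the [j]-th one
   the branch (24 or 31) that disagrees with [e j]. *)
Section Diagonal.
Variable x : R.
Variable e : nat -> (nat -> idx).

Definition stage_inv (s : stage) : Prop :=
  infinitely_coded (stage_rest s) /\
  forall t, pi t = stage_rest s -> pi (prepend (stage_len s) (stage_word s) t) = x.

Definition stage_step (j : nat) (s s' : stage) : Prop :=
  stage_inv s' /\ (stage_len s + 2 <= stage_len s')%nat /\
  (forall n, (n < stage_len s)%nat -> stage_word s' n = stage_word s n) /\
  exists P, (stage_len s <= P < stage_len s')%nat /\ stage_word s' P <> e j P.

Lemma stage_step_exists j s : stage_inv s -> exists s', stage_step j s s'.
Proof.
  destruct s as [len w y]. intros [Hy Hg]. simpl in *.
  destruct (infinitely_coded_splits y Hy) as [n0 [f [y' [Hy' Hs]]]].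
  assert (K : forall a b, (forall t, pi t = y' -> pi (splice n0 f a b t) = y) -> a <> e j (len + n0)%nat ->
     exists s', stage_step j (Stage len w y) s').
  { intros a b Hab Ha. exists (Stage (len + S (S n0)) (prepend len w (splice n0 f a b (fun _ => I1))) y').
    split; [split; auto|]; simpl.
    { intros t Ht. rewrite prepend_splice. apply Hg, Hab; auto. }
    split; [lia|]. split.
    - intros n Hn. unfold prepend. destruct (Nat.ltb_spec n len); [auto|lia].
    - exists (len + n0)%nat. split; [lia|]. unfold prepend.
      destruct (Nat.ltb_spec (len + n0) len); [lia|].
      replace (len + n0 - len)%nat with n0 by lia. rewrite splice_at. auto. }
  destruct (idx_eq_dec (e j (len + n0)%nat) I2) as [E|E].
  - apply (K I3 I1); [intros t Ht; apply Hs; eauto|rewrite E; discriminate].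
  - apply (K I2 I4); [intros t Ht; apply Hs; eauto|auto].
Qed.

Definition next_stage (j : nat) (s : stage) : stage :=
  match excluded_middle_informative (exists s', stage_step j s s') with
  | left H => proj1_sig (constructive_indefinite_description _ H)
  | right _ => s
  end.

Lemma next_stage_step j s : stage_inv s -> stage_step j s (next_stage j s).
Proof.
  intro H. unfold next_stage. destruct (excluded_middle_informative _) as [H'|H'].
  - destruct (constructive_indefinite_description _ H'). auto.
  - exfalso. apply H', stage_step_exists, H.
Qed.

Fixpoint stages (j : nat) : stage :=
  match j with O => Stage O (fun _ => I1) x | S j => next_stage j (stages j) end.

Hypothesis x_infinitely_coded : infinitely_coded x.

Lemma stages_step j : stage_inv (stages j) /\ stage_step j (stages j) (stages (S j)).
Proof.
  induction j as [|j IH].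
  - assert (H0 : stage_inv (stages O)).
    { split; auto. simpl. intros t Ht. rewrite <- Ht. f_equal. apply functional_extensionality.
      intro n. unfold prepend. simpl. f_equal. lia. }
    split; auto. apply next_stage_step, H0.
  - destruct IH as [_ [H _]]. split; auto. apply next_stage_step, H.
Qed.

Lemma stages_len j : (2 * j <= stage_len (stages j))%nat.
Proof. induction j; simpl; [lia|]. destruct (stages_step j) as [_ [_ [H _]]]. simpl in H. lia. Qed.

Lemma stages_len_mono j d : (stage_len (stages j) <= stage_len (stages (j + d)))%nat.
Proof.
  induction d; [rewrite Nat.add_0_r; lia|]. rewrite Nat.add_succ_r.
  destruct (stages_step (j + d)) as [_ [_ [H _]]]. lia.
Qed.

Lemma stages_agree j d n : (n < stage_len (stages j))%nat ->
  stage_word (stages (j + d)) n = stage_word (stages j) n.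
Proof.
  induction d; intro H; [rewrite Nat.add_0_r; auto|].
  rewrite Nat.add_succ_r. destruct (stages_step (j + d)) as [_ [_ [_ [H2 _]]]].
  rewrite H2; auto. pose proof (stages_len_mono j d). lia.
Qed.

Definition diagonal : nat -> idx := fun n => stage_word (stages (S n)) n.

Lemma diagonal_agree j n : (n < stage_len (stages j))%nat -> diagonal n = stage_word (stages j) n.
Proof.
  intro H. unfold diagonal. destruct (Nat.le_gt_cases (S n) j).
  - replace j with (S n + (j - S n))%nat by lia. rewrite stages_agree; auto.
    pose proof (stages_len (S n)). lia.
  - replace (S n) with (j + (S n - j))%nat by lia. apply stages_agree; auto.
Qed.

Lemma pi_diagonal : pi diagonal = x.
Proof.
  apply (eq_of_dist_le_pow lam); [lra|]. intro j.
  destruct (stages_step j) as [[Hy Hg] _].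
  destruct (infinitely_coded_has_coding _ Hy) as [t Ht]. rewrite <- (Hg t Ht).
  eapply Rle_trans; [apply (dist_pi_le_of_prefix _ _ (stage_len (stages j)))|].
  - intros q Hq. rewrite (diagonal_agree j q Hq). unfold prepend.
    destruct (Nat.ltb_spec q (stage_len (stages j))); [auto|lia].
  - apply pow_le_pow_of_le_one; [lra|]. pose proof (stages_len j). lia.
Qed.

Lemma diagonal_neq j : diagonal <> e j.
Proof.
  intro E. destruct (stages_step j) as [_ [_ [_ [_ [P [HP HP2]]]]]].
  apply HP2. rewrite <- E. symmetry. apply diagonal_agree. lia.
Qed.

End Diagonal.

Lemma not_U_aleph0 x : ~ U_aleph0 lam x.
Proof.
  intros [_ [e [He Hs]]].
  assert (Hx : infinitely_coded x).
  { intros [l Hl].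
    assert (Hnd : NoDup (map e (seq 0 (S (length l))))).
    { apply NoDup_map_NoDup_ForallPairs; [|apply seq_NoDup]. intros m n _ _. apply He. }
    assert (Hle := NoDup_incl_length Hnd (l' := l)).
    rewrite length_map, length_seq in Hle. enough (S (length l) <= length l)%nat by lia.
    apply Hle. intros c Hc. apply in_map_iff in Hc. destruct Hc as [n [<- _]].
    apply Hl, is_coding_iff, Hs. eauto. }
  destruct (proj1 (Hs (diagonal x e)) (proj2 (is_coding_iff _ _) (pi_diagonal x e Hx))) as [n Hn].
  exact (diagonal_neq x e Hx n (eq_sym Hn)).
Qed.

(** * Upper bound on the dimension *)

Definition compose_word (w : list idx) (y : R) : R := fold_right (fun a acc => ifs lam a acc) y w.

Lemma compose_word_affine w y : compose_word w y = compose_word w 0 + lam ^ length w * y.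
Proof. induction w as [|a w IH]; simpl; [ring|]. rewrite IH, !ifs_affine. ring. Qed.

Lemma compose_map_seq c n y : compose lam c n y = compose_word (map c (seq 0 n)) y.
Proof.
  revert y. induction n as [|n IH]; intro y; [reflexivity|].
  simpl compose. rewrite IH, seq_S, map_app. unfold compose_word. rewrite fold_right_app. reflexivity.
Qed.

Definition cylinder (w : list idx) (z : R) : Prop := exists y, 0 <= y <= 1 /\ z = compose_word w y.

Lemma cylinder_diam w z z' : cylinder w z -> cylinder w z' -> Rabs (z - z') <= lam ^ length w.
Proof.
  intros [y [Hy ->]] [y' [Hy' ->]]. rewrite (compose_word_affine w y), (compose_word_affine w y').
  replace (_ - _) with (lam ^ length w * (y - y')) by ring.
  rewrite Rabs_mult, (Rabs_right (lam ^ length w)) by (left; apply pow_lt; auto).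
  assert (Rabs (y - y') <= 1) by (apply Rabs_le; lra).
  pose proof (pow_lt lam (length w) lam_pos). nra.
Qed.

Lemma pi_in_cylinder c n : cylinder (map c (seq 0 n)) (pi c).
Proof.
  exists (pi (shift n c)). split; [apply pi_bounds|]. rewrite (pi_split c n) at 1. apply compose_map_seq.
Qed.

Lemma U_codings k x : U lam k x ->
  exists c l, pi c = x /\ length l = k /\ NoDup l /\ (forall d, pi d = x <-> In d l).
Proof.
  intros [[c Hc] [l [Hlen [Hnd Hl]]]]. exists c, l. apply is_coding_iff in Hc.
  repeat split; auto; intro H; [apply Hl, is_coding_iff|apply is_coding_iff, Hl]; auto.
Qed.

Definition dimH : R := ln mu / - ln lam.

Lemma ln_lam_neg : ln lam < 0.
Proof. rewrite <- ln_1. apply ln_increasing; lra. Qed.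

Lemma dimH_pos : 0 < dimH.
Proof.
  pose proof ln_lam_neg. pose proof mu_ge_3.
  assert (0 < ln mu) by (rewrite <- ln_1; apply ln_increasing; lra).
  apply Rdiv_lt_0_compat; lra.
Qed.

Lemma Rpower_lam_dimH : Rpower lam dimH = / mu.
Proof.
  unfold Rpower, dimH. pose proof ln_lam_neg. pose proof mu_ge_3.
  replace (ln mu / - ln lam * ln lam) with (- ln mu) by (field; lra).
  rewrite exp_Ropp, exp_ln by lra. reflexivity.
Qed.

(* Every coding of a point of [U_(2^k)] has fewer than [2^k] overlaps, and words with
   boundedly many overlaps grow at any rate [rho > mu]. *)
Lemma U_hausdorff_null_above_dimH k s : dimH < s -> hausdorff_null s (U lam (2 ^ k)).
Proof.
  intro Hs. pose proof dimH_pos. pose proof mu_ge_3. pose proof ln_lam_neg.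
  set (q := Rpower lam s).
  assert (Hq : 0 < q) by apply Rpower_pos.
  assert (Hmq : mu * q < 1).
  { unfold q, Rpower. rewrite <- (exp_ln mu), <- exp_plus, <- exp_0 by lra.
    apply exp_increasing. unfold dimH in Hs.
    apply (Rmult_lt_compat_r (- ln lam)) in Hs; [|lra].
    unfold Rdiv in Hs. rewrite Rmult_assoc, Rinv_l in Hs by lra. lra. }
  set (rho := (mu + / q) / 2).
  assert (Hiq : / q * q = 1) by (apply Rinv_l; lra).
  assert (Hrho : rho * q < 1) by (unfold rho; nra).
  destruct (few_overlap_words_growth (2 ^ k) rho) as [C [HC Hcount]]; [unfold rho; nra|].
  apply hausdorff_null_of_finite_covers; [lra|]. intros delta eps Hdelta Heps.
  destruct (pow_lt_eventually (rho * q) (eps / C)) as [N1 HN1];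
    [split; [apply Rmult_lt_0_compat|]; unfold rho in *; nra|apply Rdiv_lt_0_compat; lra|].
  destruct (pow_lt_eventually lam delta) as [N2 HN2]; [lra|auto|].
  set (n := Nat.max N1 N2).
  set (L := filter (fun w => Nat.leb (overlap_count w) (2 ^ k)) (words (S n))).
  exists (map cylinder L), (lam ^ S n). split; [split|split; [|split]].
  - apply pow_lt; auto.
  - left. apply HN2. lia.
  - intros G z z' HG Hz Hz'. apply in_map_iff in HG. destruct HG as [w [<- Hw]].
    apply filter_In in Hw. rewrite <- (words_length _ _ (proj1 Hw)). apply cylinder_diam; auto.
  - intros x Hx. destruct (U_codings _ _ Hx) as [c [l [Hc [Hlen [Hnd Hl]]]]].
    exists (cylinder (map c (seq 0 (S n)))). split; [|rewrite <- Hc; apply pi_in_cylinder].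
    apply in_map, filter_In. split; [apply In_words; rewrite length_map, length_seq; auto|].
    apply Nat.leb_le. rewrite overlap_count_map_seq.
    pose proof (overlaps_lt_codings x l c n Hnd Hl Hc). lia.
  - rewrite length_map, Rpower_pow_base by auto. fold q.
    specialize (HN1 (S n) ltac:(lia)). rewrite Rpow_mult_distr in HN1.
    eapply Rle_lt_trans; [apply Rmult_le_compat_r; [apply pow_le; lra|apply Hcount]|].
    apply (Rmult_lt_reg_l (/ C)); [apply Rinv_0_lt_compat; lra|].
    replace (/ C * (C * rho ^ S n * q ^ S n)) with (rho ^ S n * q ^ S n) by (field; lra).
    unfold Rdiv in HN1. lra.
Qed.

(** * Lower bound on the dimension *)

Lemma splits_prefix24 t : splits (pi (splice 0 (fun _ => I1) I2 I4 t)) 0 (fun _ => I1) (pi t).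
Proof.
  set (f := fun _ : nat => I1).
  assert (Hs : splits (pi (splice 0 f I2 I4 t)) 0 (splice 0 f I2 I4 t) (pi t)).
  { replace (pi t) with (pi (shift 2 (splice 0 f I2 I4 t))) by (rewrite shift_splice; reflexivity).
    apply (splits_of_codings _ 0 _ (splice 0 f I3 I1 t));
      rewrite ?splice_at, ?splice_at_S, ?shift_splice; auto; try (intros; lia).
    rewrite (pi_shift2 (splice 0 f I3 I1 t)), (pi_shift2 (splice 0 f I2 I4 t)).
    rewrite !splice_at, !splice_at_S, !shift_splice. simpl. ring. }
  assert (E : forall a b t', splice 0 (splice 0 f I2 I4 t) a b t' = splice 0 f a b t')
    by (intros; apply splice_ext; lia).
  intro d. rewrite (Hs d). setoid_rewrite E. tauto.
Qed.

Fixpoint prefix24 (k : nat) (b : nat -> idx) : nat -> idx :=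
  match k with O => b | S k => splice 0 (fun _ => I1) I2 I4 (prefix24 k b) end.

Lemma prefix24_in_U b k : overlap_free b -> U lam (2 ^ k) (pi (prefix24 k b)).
Proof.
  intro Hb. split; [exists (prefix24 k b); apply is_coding_iff; auto|].
  enough (exists l, length l = (2 ^ k)%nat /\ NoDup l /\ forall c, pi c = pi (prefix24 k b) <-> In c l)
    as [l [Hlen [Hnd Hl]]] by (exists l; split; [auto|split; [auto|]]; intro c; rewrite is_coding_iff; apply Hl).
  induction k as [|k [lt [Hlen [Hnd Hl]]]].
  - exists (b :: nil). repeat split; [repeat constructor; auto| |].
    + intro H. left. symmetry. apply overlap_free_coding_unique; auto.
    + intros [<-|[]]. reflexivity.
  - destruct (splits_codings_list _ _ _ _ lt (splits_prefix24 (prefix24 k b)) Hnd Hl) as [Hnd' Hl'].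
    eexists. split; [|split; [exact Hnd'|exact Hl']].
    rewrite length_app, !length_map, Hlen. simpl. lia.
Qed.

Lemma pi_prefix24_diff b b' k : pi (prefix24 k b) - pi (prefix24 k b') = lam ^ (2 * k) * (pi b - pi b').
Proof.
  induction k as [|k IH]; [simpl; ring|]. simpl prefix24.
  rewrite !(pi_shift2 (splice _ _ _ _ _)), !splice_at, !splice_at_S, !shift_splice.
  replace (2 * S k)%nat with (2 + 2 * k)%nat by lia. rewrite pow_add, Rmult_assoc, <- IH. simpl. ring.
Qed.

Definition lower_end (a : idx) : R :=
  match a with I1 => 0 | I2 => 2 * lam | I3 => 3 * lam + lam ^ 2 | I4 => 1 - lam end.

Definition upper_end (a : idx) : R :=
  match a with I1 => lam | I2 => 2 * lam + 4 * lam ^ 2 - lam ^ 3 | I3 => 4 * lam - lam ^ 2 | I4 => 1 end.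

(* Forbidding 24 and 31 pulls the images of [f_2] and [f_3] apart. *)
Lemma overlap_free_pi_bounds a : overlap_free a -> lower_end (a O) <= pi a <= upper_end (a O).
Proof.
  intro Ha. specialize (Ha O). rewrite pi_shift2. pose proof (pi_bounds (shift 2 a)).
  assert (0 <= lam ^ 2 * pi (shift 2 a) <= lam ^ 2) by nra.
  destruct (a O), (a 1%nat); try discriminate; cbn [lower_end upper_end trans]; split; nra.
Qed.

Definition separation : R := lam * (1 - 5 * lam + lam ^ 2).

Lemma separation_pos : 0 < separation.
Proof. unfold separation. nra. Qed.

Lemma end_gaps :
  upper_end I1 + separation <= lower_end I2 /\ upper_end I2 + separation <= lower_end I3 /\
  upper_end I3 + separation <= lower_end I4 /\ forall a, lower_end a <= upper_end a.
Proof.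
  unfold separation. assert (0 < lam * lam) by nra.
  split; [|split; [|split]]; [simpl; nra..|]. intro a. destruct a; simpl; nra.
Qed.

Lemma overlap_free_separation_start a b : overlap_free a -> overlap_free b -> a O <> b O ->
  separation <= Rabs (pi a - pi b).
Proof.
  intros Ha Hb Hne.
  pose proof (overlap_free_pi_bounds a Ha). pose proof (overlap_free_pi_bounds b Hb).
  destruct end_gaps as [G1 [G2 [G3 G]]]. pose proof (G I1). pose proof (G I2).
  pose proof (G I3). pose proof (G I4). pose proof separation_pos.
  unfold Rabs. destruct (Rcase_abs _); destruct (a O), (b O); try congruence; lra.
Qed.

Lemma overlap_free_separation u u' p : overlap_free u -> overlap_free u' ->
  (forall q, (q < p)%nat -> u q = u' q) -> u p <> u' p -> separation * lam ^ p <= Rabs (pi u - pi u').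
Proof.
  intros Hu Hu' Hq Hne. rewrite (dist_pi_prefix u u' p Hq), Rmult_comm.
  apply Rmult_le_compat_l; [left; apply pow_lt; auto|].
  apply overlap_free_separation_start; try apply overlap_free_shift; auto.
  unfold shift. rewrite Nat.add_0_r. auto.
Qed.

Lemma word_of_small_set (X : (nat -> idx) -> R) (H r : R) (E : R -> Prop) :
  0 < H -> 0 < r <= H * lam ->
  (forall b b' p, overlap_free b -> overlap_free b' -> (forall q, (q < p)%nat -> b q = b' q) ->
     b p <> b' p -> H * lam ^ p <= Rabs (X b - X b')) ->
  (forall z z', E z -> E z' -> Rabs (z - z') <= r) ->
  exists w, H * lam ^ S (length w) <= r /\
    forall b, overlap_free b -> E (X b) -> w = map b (seq 0 (length w)).
Proof.
  intros HH Hr Hsep Hdiam.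
  destruct (least_witness (fun J => H * lam ^ J <= r)) as [[|j] [HJ Hmin]].
  { destruct (pow_lt_eventually lam (r / H)) as [N HN]; [lra|apply Rdiv_lt_0_compat; lra|].
    exists N. specialize (HN N (le_n _)). apply (Rmult_lt_compat_l H) in HN; auto.
    replace (H * (r / H)) with r in HN by (field; lra). lra. }
  { simpl in HJ. nra. }
  assert (Hj : r < H * lam ^ j) by (apply Rnot_le_lt, Hmin; lia).
  destruct (classic (exists b0, overlap_free b0 /\ E (X b0))) as [[b0 [Hb0 Eb0]]|Hno].
  - exists (map b0 (seq 0 j)). rewrite length_map, length_seq. split; auto.
    intros b Hb Eb. apply map_ext_in. intros i Hi. apply in_seq in Hi.
    apply NNPP. intro ne. destruct (first_difference b0 b) as [p [Hp1 Hp2]]; [congruence|].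
    assert (p <= i)%nat by (apply NNPP; intro; apply ne, Hp2; lia).
    pose proof (Hsep b0 b p Hb0 Hb Hp2 Hp1). pose proof (Hdiam _ _ Eb0 Eb).
    assert (lam ^ j <= lam ^ p) by (apply pow_le_pow_of_le_one; [lra|lia]).
    assert (H * lam ^ j <= H * lam ^ p) by (apply Rmult_le_compat_l; lra). lra.
  - exists (map (fun _ => I1) (seq 0 j)). rewrite length_map, length_seq. split; auto.
    intros b Hb Eb. exfalso. eauto.
Qed.

Lemma mass_le_Rpower (H r s : R) w : 0 < H -> 0 < r <= H * lam -> 0 < s <= dimH ->
  H * lam ^ S (length w) <= r -> mass w <= sqrt 2 * Rpower (r * / (H * lam)) s.
Proof.
  intros HH Hr Hs Hw. pose proof mu_ge_3. pose proof (perron_bounds (last w I1)).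
  set (t := r * / (H * lam)).
  assert (Hlw : 0 < lam ^ length w) by (apply pow_lt; auto).
  assert (Ht : lam ^ length w <= t <= 1).
  { unfold t. split; apply (Rmult_le_reg_r (H * lam)); try nra;
      rewrite Rmult_assoc, Rinv_l, Rmult_1_r by nra; simpl in Hw; lra. }
  assert (Hmass : mass w <= sqrt 2 * Rpower (lam ^ length w) dimH).
  { unfold mass. rewrite Rpower_pow_base, Rpower_lam_dimH, pow_inv by auto.
    unfold Rdiv. apply Rmult_le_compat_r; [|lra]. left. apply Rinv_0_lt_compat, pow_lt. lra. }
  assert (Rpower (lam ^ length w) dimH <= Rpower t dimH) by (apply Rle_Rpower_l; lra).
  assert (Rpower t dimH <= Rpower t s) by (apply Rpower_antimono_of_le_one; lra).
  pose proof sqrt2_bounds. nra.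
Qed.

(* Mass distribution principle: the overlap-free sequences, prefixed by [(24)^k], are
   embedded in [U_(2^k)] with separation [separation * lam ^ (2k + p)], and any
   cover of the image induces a cover of the shift by cylinders whose Parry masses
   are controlled by the [s]-th powers of the diameters. *)
Lemma U_not_hausdorff_null_below_dimH k s : 0 < s -> s < dimH -> ~ hausdorff_null s (U lam (2 ^ k)).
Proof.
  intros Hs0 Hs Hnull. pose proof separation_pos as Hsep0. pose proof sqrt2_bounds as Hs2.
  set (H := lam ^ (2 * k) * separation).
  assert (HH : 0 < H) by (apply Rmult_lt_0_compat; [apply pow_lt|]; auto).
  set (C := Rpower (/ (H * lam)) s).
  assert (HC : 0 < C) by apply Rpower_pos.
  destruct (Hnull (H * lam) (/ (2 * C)) ltac:(nra) ltac:(apply Rinv_0_lt_compat; lra))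
    as [E [r [l [Hcov [Hr [Hdiam [Hsum Hl]]]]]]].
  set (X := fun b => pi (prefix24 k b)).
  assert (Hsep : forall b b' p, overlap_free b -> overlap_free b' ->
      (forall q, (q < p)%nat -> b q = b' q) -> b p <> b' p -> H * lam ^ p <= Rabs (X b - X b')).
  { intros b b' p Hb Hb' Hq Hne. unfold X. rewrite pi_prefix24_diff, Rabs_mult.
    rewrite (Rabs_right (lam ^ (2 * k))) by (left; apply pow_lt; auto). unfold H.
    rewrite Rmult_assoc. apply Rmult_le_compat_l; [left; apply pow_lt; auto|].
    apply overlap_free_separation; auto. }
  assert (HW : forall n, exists w, H * lam ^ S (length w) <= r n /\
      forall b, overlap_free b -> E n (X b) -> w = map b (seq 0 (length w)))
    by (intro n; apply word_of_small_set; auto).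
  destruct (choice _ HW) as [W HWs].
  destruct (kraft_mass_inequality W) as [M HM].
  { intros b Hb. destruct (Hcov (X b) (prefix24_in_U b k Hb)) as [n Hn]. exists n. apply HWs; auto. }
  assert (Hmass : forall n, mass (W n) <= sqrt 2 * C * Rpower (r n) s).
  { intro n. replace (sqrt 2 * C * Rpower (r n) s) with (sqrt 2 * Rpower (r n * / (H * lam)) s).
    - apply (mass_le_Rpower H); [auto|apply Hr|lra|apply HWs].
    - unfold C. rewrite <- Rpower_mult_distr by (try apply Hr; apply Rinv_0_lt_compat; nra). ring. }
  assert (Hpart : sum_f_R0 (fun n => Rpower (r n) s) M <= l).
  { apply growing_ineq; [|exact Hsum]. intro n. simpl. pose proof (Rpower_pos (r (S n)) s). lra. }
  assert (sum_f_R0 (fun n => mass (W n)) M <= sqrt 2 * C * sum_f_R0 (fun n => Rpower (r n) s) M).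
  { rewrite scal_sum. apply sum_Rle. intros n _. rewrite Rmult_comm. apply Hmass. }
  assert (sqrt 2 * C * l < sqrt 2 * C * / (2 * C)) by (apply Rmult_lt_compat_l; nra).
  replace (sqrt 2 * C * / (2 * C)) with (sqrt 2 / 2) in * by (field; lra).
  assert (sqrt 2 * C * sum_f_R0 (fun n => Rpower (r n) s) M <= sqrt 2 * C * l)
    by (apply Rmult_le_compat_l; nra).
  lra.
Qed.

Lemma U_pow2_hausdorff_dim k : hausdorff_dim (U lam (2 ^ k)) dimH.
Proof.
  apply hausdorff_dim_of_thresholds; [|intros; apply U_not_hausdorff_null_below_dimH; auto|apply dimH_pos].
  intros. apply U_hausdorff_null_above_dimH; auto.
Qed.

End Coding.

Lemma lam_bounds (lam : R) : 0 < lam -> lam < (5 - sqrt 21) / 2 ->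
  lam < 1 / 4 /\ 0 < 1 - 5 * lam + lam ^ 2.
Proof.
  intros H0 H1. pose proof (sqrt_pos 21). pose proof (sqrt_sqrt 21 ltac:(lra)).
  assert (21 < (5 - 2 * lam) * (5 - 2 * lam)) by nra. split; nra.
Qed.

Theorem theorem2p23 (lam : R) (hlam0 : 0 < lam) (hlam1 : lam < (5 - sqrt 21) / 2) :
  (forall k : nat, (1 <= k)%nat ->
     hausdorff_dim (U lam (2 ^ k)) (ln (2 + sqrt 2) / (- ln lam)) /\
     hausdorff_dim (U lam 1%nat) (ln (2 + sqrt 2) / (- ln lam))) /\
  (forall i : nat, (1 <= i)%nat -> ~ (exists k : nat, i = (2 ^ k)%nat) ->
     forall x : R, ~ U lam i x) /\
  (forall x : R, ~ U_aleph0 lam x).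
Proof.
  destruct (lam_bounds lam hlam0 hlam1) as [Hq Hgap].
  split; [|split].
  - intros k _. split; [apply U_pow2_hausdorff_dim; auto|].
    apply (U_pow2_hausdorff_dim lam hlam0 Hq Hgap 0).
  - intros i Hi Hnot x Hx. apply Hnot.
    destruct (U_codings lam hlam0 Hq Hgap i x Hx) as [c [l [Hc [Hlen [Hnd Hl]]]]].
    eapply codings_count_pow2; eauto.
  - apply not_U_aleph0; auto.
Qed.
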